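(* Under all the hypotheses of the scalar refinement lemma (a presented PROP $\mathcal{P}^{\mathrm{src}}/\mathcal{R}^{\mathrm{src}}$ with a faithful strict symmetric monoidal interpretation into an endomorphism-only symmetric monoidal subcategory $\mathcal{C}^{\mathrm{src}}\subseteq\mathbf{FdHilb}$ whose scalar group $\mathcal{C}^{\mathrm{src}}(0,0)$ is cyclic of order $m$ generated by the interpretation of a source scalar $s$, which has no hidden phases and all of whose morphisms are invertible in $\mathcal{C}^{\mathrm{src}}$; with $\ell\ge1$, $\zeta$ of order $m\ell$ and $r$ with $\zeta^r=[\![s]\!]_{\mathrm{src}}$), let $C_1,C_2$ be morphisms built only from source generators (no occurrence of $\omega$). If $C_1=C_2$ is derivable in the scalar-refined presentation $\mathcal{P}^{\mathrm{src},\sharp}/\mathcal{R}^{\mathrm{src},\sharp}$, then $C_1=C_2$ is already derivable in $\mathcal{P}^{\mathrm{src}}/\mathcal{R}^{\mathrm{src}}$.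
   Context: A PROP is a strict symmetric monoidal category with objects the natural numbers, $n\otimes m=n+m$, unit $0$; a presented PROP $\mathcal{P}/\mathcal{R}$ is the free PROP on a signature of generators modulo the congruence generated by equations $\mathcal{R}$. $\mathbf{FdHilb}$ is the strict symmetric monoidal category of finite-dimensional Hilbert spaces with $n$ interpreted as $(\mathbb{C}^d)^{\otimes n}$. No hidden phases means: whenever $\lambda\in\mathrm{U}(1)$ and $\lambda\,\mathrm{id}_n\in\mathcal{C}^{\mathrm{src}}(n,n)$, then $\lambda\in\mathcal{C}^{\mathrm{src}}(0,0)$. Faithful means injective on hom-sets. The scalar-refined presentation $\mathcal{P}^{\mathrm{src},\sharp}/\mathcal{R}^{\mathrm{src},\sharp}$ adjoins to $\mathcal{P}^{\mathrm{src}}/\mathcal{R}^{\mathrm{src}}$ a new generator $\omega:0\to0$ and the relations $\omega^{m\ell}=\mathrm{id}_0$ and $\omega^r=s$ ($\omega^k$ the $k$-fold composite of $\omega$). *)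

(* Presented PROPs as a deep embedding: string-diagram
   terms over a signature, derivability as the congruence generated by the
   strict-symmetric-monoidal (PROP) axioms plus the given equations, and the
   standard strict symmetric monoidal interpretation into FdHilb, where the
   object n is (C^d)^{(x)n} and a morphism n -> m is represented by its matrix
   in the computational basis, indexed by words (tuples) of length m (rows)
   and n (columns) over 'I_d. *)
From HB Require Import structures.
From mathcomp Require Import all_boot all_algebra.
From mathcomp Require Import Rstruct complex.
Set Implicit Arguments.
Unset Strict Implicit.
Unset Printing Implicit Defensive.
Import GRing.Theory Num.Theory.
Local Open Scope ring_scope.

Definition CC := (Rdefinitions.R)[i].

(* Terms of the free PROP on a signature with generator set G.
   Tcomp f g is the diagrammatic composite "f then g" (= g o f). *)
Inductive term (G : Type) : Type :=
| Tid : nat -> term G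
| Tswap : nat -> nat -> term G
| Tgen : G -> term G
| Tcomp : term G -> term G -> term G
| Ttens : term G -> term G -> term G.
Arguments Tid {G}.
Arguments Tswap {G}.

Fixpoint tmap (G G' : Type) (h : G -> G') (t : term G) : term G' :=
  match t with
  | Tid n => Tid n
  | Tswap a b => Tswap a b
  | Tgen g => Tgen (h g)
  | Tcomp f g => Tcomp (tmap h f) (tmap h g)
  | Ttens f g => Ttens (tmap h f) (tmap h g)
  end.

Section Syntax.
Variables (G : Type) (gdom gcod : G -> nat).

Fixpoint tdom (t : term G) : nat :=
  match t with
  | Tid n => n
  | Tswap a b => (a + b)%N
  | Tgen g => gdom g
  | Tcomp f _ => tdom f
  | Ttens f g => (tdom f + tdom g)%N
  end.

Fixpoint tcod (t : term G) : nat :=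
  match t with
  | Tid n => n
  | Tswap a b => (b + a)%N
  | Tgen g => gcod g
  | Tcomp _ g => tcod g
  | Ttens f g => (tcod f + tcod g)%N
  end.

Fixpoint wt (t : term G) : bool :=
  match t with
  | Tcomp f g => [&& wt f, wt g & tcod f == tdom g]
  | Ttens f g => wt f && wt g
  | _ => true
  end.

Definition hasType (t : term G) (n m : nat) : bool :=
  [&& wt t, tdom t == n & tcod t == m].

Definition eqns := nat -> nat -> term G -> term G -> Prop.

Inductive prov (R : eqns) : nat -> nat -> term G -> term G -> Prop :=
| pv_ax n m f g : R n m f g -> hasType f n m -> hasType g n m -> prov R n m f g
| pv_refl n m f : hasType f n m -> prov R n m f f
| pv_sym n m f g : prov R n m f g -> prov R n m g f
| pv_trans n m f g h : prov R n m f g -> prov R n m g h -> prov R n m f h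
| pv_comp n m k f f' g g' :
    prov R n m f f' -> prov R m k g g' -> prov R n k (Tcomp f g) (Tcomp f' g')
| pv_tens a b c e f f' g g' :
    prov R a b f f' -> prov R c e g g' ->
    prov R (a + c) (b + e) (Ttens f g) (Ttens f' g')
| pv_compA n m k p f g h :
    hasType f n m -> hasType g m k -> hasType h k p ->
    prov R n p (Tcomp (Tcomp f g) h) (Tcomp f (Tcomp g h))
| pv_id_l n m f : hasType f n m -> prov R n m (Tcomp (Tid n) f) f
| pv_id_r n m f : hasType f n m -> prov R n m (Tcomp f (Tid m)) f
| pv_tensA a b c e p q f g h :
    hasType f a b -> hasType g c e -> hasType h p q ->
    prov R (a + c + p) (b + e + q) (Ttens (Ttens f g) h) (Ttens f (Ttens g h))
| pv_tens_unit_l n m f : hasType f n m -> prov R n m (Ttens (Tid 0) f) f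
| pv_tens_unit_r n m f : hasType f n m -> prov R n m (Ttens f (Tid 0)) f
| pv_tens_id a b : prov R (a + b) (a + b) (Ttens (Tid a) (Tid b)) (Tid (a + b))
| pv_interchange a b c e p q f f' g g' :
    hasType f a b -> hasType f' b c -> hasType g e p -> hasType g' p q ->
    prov R (a + e) (c + q) (Tcomp (Ttens f g) (Ttens f' g'))
                           (Ttens (Tcomp f f') (Tcomp g g'))
| pv_swap_inv a b :
    prov R (a + b) (a + b) (Tcomp (Tswap a b) (Tswap b a)) (Tid (a + b))
| pv_swap_nat a b c e f g :
    hasType f a b -> hasType g c e ->
    prov R (a + c) (e + b) (Tcomp (Ttens f g) (Tswap b e))
                           (Tcomp (Tswap a c) (Ttens g f))
| pv_swap_unit a : prov R a a (Tswap a 0) (Tid a)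
| pv_hex1 a b c :
    prov R (a + (b + c)) (b + c + a) (Tswap a (b + c))
         (Tcomp (Ttens (Tswap a b) (Tid c)) (Ttens (Tid b) (Tswap a c)))
| pv_hex2 a b c :
    prov R (a + b + c) (c + (a + b)) (Tswap (a + b) c)
         (Tcomp (Ttens (Tid a) (Tswap b c)) (Ttens (Tswap a c) (Tid b))).

End Syntax.

Section Semantics.
Variables (G : Type) (gdom gcod : G -> nat) (d : nat).
(* interpretation of the generators: the matrix entry <y| [[g]] |x> *)
Variable I : G -> seq 'I_d -> seq 'I_d -> CC.

Fixpoint sem (t : term G) : seq 'I_d -> seq 'I_d -> CC :=
  match t with
  | Tid n => fun y x => (y == x)%:R
  | Tswap a b => fun y x => (y == drop a x ++ take a x)%:R
  | Tgen g => I g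
  | Tcomp f g => fun z x =>
      \sum_(y : (tcod gcod f).-tuple 'I_d) sem g z y * sem f (val y) x
  | Ttens f g => fun z x =>
      sem f (take (tcod gcod f) z) (take (tdom gdom f) x) *
      sem g (drop (tcod gcod f) z) (drop (tdom gdom f) x)
  end.
End Semantics.

Definition sem_eq (d n m : nat) (F F' : seq 'I_d -> seq 'I_d -> CC) : Prop :=
  forall (y : m.-tuple 'I_d) (x : n.-tuple 'I_d), F y x = F' y x.

Definition scal_id (d : nat) (lam : CC) : seq 'I_d -> seq 'I_d -> CC :=
  fun y x => lam * (y == x)%:R.

Definition scalar_of (d : nat) (F : seq 'I_d -> seq 'I_d -> CC) : CC := F [::] [::].

(* Scalar refinement: new generator omega : 0 -> 0 (None); source
   generators are embedded via Some. *)
Definition sdom (G : Type) (gdom : G -> nat) (o : option G) : nat :=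
  if o is Some g then gdom g else 0%N.

Definition omega_pow (G : Type) (k : nat) : term (option G) :=
  iter k (fun t => Tcomp (Tgen None) t) (Tid 0).

Inductive Rsharp (G : Type) (R : eqns G) (s : term G) (m l r : nat)
  : eqns (option G) :=
| rs_src n n' u1 u2 : R n n' u1 u2 -> Rsharp R s m l r n n' (tmap Some u1) (tmap Some u2)
| rs_order : Rsharp R s m l r 0 0 (omega_pow G (m * l)) (Tid 0)
| rs_root : Rsharp R s m l r 0 0 (omega_pow G r) (tmap Some s).

(* Erasing omega (read as id_0) maps derivations of the refined presentation
   to derivations of the source one, except that the relation omega^r = s
   turns into id_0 = s.  So we track, along a refined derivation of u = v,
   source scalars p, q with p (x) erase u = q (x) erase v in P/R and
   zeta^#u [[q]] = zeta^#v [[p]], where #u counts the omegas of u; the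
   relations omega^(ml) = id_0 and omega^r = s respect this because
   zeta^(ml) = 1 and zeta^r = [[s]].  For omega-free C1, C2 this gives
   p (x) C1 = q (x) C2 with [[p]] = [[q]]; a source inverse p' of p then
   satisfies p;p' = id_0 = q;p' by faithfulness, and cancels the scalars. *)
From mathcomp Require Import all_boot all_algebra.
From mathcomp Require Import Rstruct complex.
From mathcomp Require Import zify ring.
Set Implicit Arguments.
Unset Strict Implicit.
Unset Printing Implicit Defensive.
Import GRing.Theory Num.Theory.

Section PropTheory.
Variables (G : Type) (gdom gcod : G -> nat) (R : eqns G).
Local Notation hasT := (hasType gdom gcod).
Local Notation prv := (prov gdom gcod R).

Lemma hasType_cast f n m n' m' : n = n' -> m = m' -> hasT f n m -> hasT f n' m'.
Proof. by move=> -> ->. Qed.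

Lemma hasType_id n : hasT (Tid n) n n.
Proof. by rewrite /hasType /= !eqxx. Qed.

Lemma hasType_swap a b : hasT (Tswap a b) (a + b) (b + a).
Proof. by rewrite /hasType /= !eqxx. Qed.

Lemma hasType_tens f g a b c e :
  hasT f a b -> hasT g c e -> hasT (Ttens f g) (a + c) (b + e).
Proof.
rewrite /hasType /= => /and3P[wf /eqP-> /eqP->] /and3P[wg /eqP-> /eqP->].
by rewrite wf wg !eqxx.
Qed.

Lemma hasType_comp f g a b c : hasT f a b -> hasT g b c -> hasT (Tcomp f g) a c.
Proof.
rewrite /hasType /= => /and3P[wf /eqP-> /eqP->] /and3P[wg /eqP-> /eqP->].
by rewrite wf wg !eqxx.
Qed.

Lemma prov_hasType n m f g : prv n m f g -> hasT f n m /\ hasT g n m.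
Proof.
elim=> {n m f g}.
- by [].
- by [].
- by move=> n m f g _ [].
- by move=> n m f g h _ [? _] _ [_ ?].
- by move=> n m k f f' g g' _ [? ?] _ [? ?]; split; apply: hasType_comp; eauto.
- by move=> a b c e f f' g g' _ [? ?] _ [? ?]; split; apply: hasType_tens.
- by move=> n m k p f g h Hf Hg Hh; split; do 2?apply: hasType_comp; eauto.
- by move=> n m f Hf; split=> //; apply: hasType_comp (hasType_id n) Hf.
- by move=> n m f Hf; split=> //; apply: hasType_comp Hf (hasType_id m).
- move=> a b c e p q f g h Hf Hg Hh; split; first by do 2?apply: hasType_tens.
  by apply: hasType_cast (hasType_tens Hf (hasType_tens Hg Hh)); rewrite addnA.
- by move=> n m f Hf; split=> //; exact: hasType_tens (hasType_id 0) Hf.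
- move=> n m f Hf; split=> //.
  by apply: hasType_cast (hasType_tens Hf (hasType_id 0)); rewrite addn0.
- by move=> a b; split; [exact: hasType_tens (hasType_id a) (hasType_id b)|apply: hasType_id].
- move=> a b c e p q f f' g g' Hf Hf' Hg Hg'; split.
    exact: hasType_comp (hasType_tens Hf Hg) (hasType_tens Hf' Hg').
  exact: hasType_tens (hasType_comp Hf Hf') (hasType_comp Hg Hg').
- move=> a b; split; last exact: hasType_id.
  apply: hasType_comp (hasType_swap a b) _.
  by apply: hasType_cast (hasType_swap b a); rewrite addnC.
- move=> a b c e f g Hf Hg; split.
    exact: hasType_comp (hasType_tens Hf Hg) (hasType_swap b e).
  exact: hasType_comp (hasType_swap a c) (hasType_tens Hg Hf).
- by move=> a; split; [apply: hasType_cast (hasType_swap a 0); lia | apply: hasType_id].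
- move=> a b c; split; first exact: hasType_swap.
  have Hbac : hasT (Ttens (Tid b) (Tswap a c)) (b + a + c) (b + (c + a)).
    by apply: hasType_cast (hasType_tens (hasType_id b) (hasType_swap a c)); lia.
  by apply: hasType_cast (hasType_comp (hasType_tens (hasType_swap a b) (hasType_id c)) Hbac); lia.
- move=> a b c; split; first exact: hasType_swap.
  have Hacb : hasT (Ttens (Tswap a c) (Tid b)) (a + (c + b)) (c + a + b).
    by apply: hasType_cast (hasType_tens (hasType_swap a c) (hasType_id b)); lia.
  by apply: hasType_cast (hasType_comp (hasType_tens (hasType_id a) (hasType_swap b c)) Hacb); lia.
Qed.

Lemma prov_swap0l n : prv n n (Tswap 0 n) (Tid n).
Proof.
have inv : prv n n (Tcomp (Tswap n 0) (Tswap 0 n)) (Tid n).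
  by have := pv_swap_inv gdom gcod R n 0; rewrite addn0.
have sw : hasT (Tswap 0 n) n n by apply: hasType_cast (hasType_swap 0 n); lia.
apply: pv_trans (pv_sym (pv_id_l R sw)) (pv_trans _ inv).
exact: pv_comp (pv_sym (pv_swap_unit _ _ _ n)) (pv_refl R sw).
Qed.

Lemma prov_scalar_tensC p f n m :
  hasT p 0 0 -> hasT f n m -> prv n m (Ttens p f) (Ttens f p).
Proof.
(* Naturality of the symmetry for a = b = 0, where both swaps are identities. *)
move=> p00 Hf; have swap_nat := pv_swap_nat R p00 Hf; rewrite addn0 in swap_nat.
have pf : hasT (Ttens p f) n m := hasType_tens p00 Hf.
have fp : hasT (Ttens f p) n m by apply: hasType_cast (hasType_tens Hf p00); lia.
apply: pv_trans (pv_sym (pv_id_r R pf)) _.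
apply: pv_trans (pv_comp (pv_refl R pf) (pv_sym (prov_swap0l m))) _.
apply: pv_trans swap_nat (pv_trans _ (pv_id_l R fp)).
exact: pv_comp (prov_swap0l n) (pv_refl R fp).
Qed.

Section Scalars.
Variables (p p' : term G).
Hypotheses (p00 : hasT p 0 0) (p'00 : hasT p' 0 0).

Lemma prov_scalar_comp_tens : prv 0 0 (Tcomp p p') (Ttens p p').
Proof.
apply: pv_trans _ (pv_trans (pv_interchange R p00 (hasType_id 0) (hasType_id 0) p'00) _).
  exact: pv_comp (pv_sym (pv_tens_unit_r R p00)) (pv_sym (pv_tens_unit_l R p'00)).
exact: pv_tens (pv_id_r R p00) (pv_id_l R p'00).
Qed.

Lemma prov_scalar_tens_comp f g n m k : hasT f n m -> hasT g m k ->
  prv n k (Ttens (Ttens p p') (Tcomp f g)) (Tcomp (Ttens p f) (Ttens p' g)).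
Proof.
move=> Hf Hg; apply: pv_trans (pv_sym (pv_interchange R p00 p'00 Hf Hg)).
exact: pv_tens (pv_sym prov_scalar_comp_tens) (pv_refl R (hasType_comp Hf Hg)).
Qed.

Lemma prov_scalar_tens_tens f g a b c e : hasT f a b -> hasT g c e ->
  prv (a + c) (b + e) (Ttens (Ttens p p') (Ttens f g)) (Ttens (Ttens p f) (Ttens p' g)).
Proof.
move=> Hf Hg.
apply: pv_trans (pv_tensA R p00 p'00 (hasType_tens Hf Hg)) _.
apply: pv_trans _ (pv_sym (pv_tensA R p00 Hf (hasType_tens p'00 Hg))).
apply: pv_tens (pv_refl R p00) _.
apply: pv_trans (pv_sym (pv_tensA R p'00 Hf Hg)) _.
have assoc := pv_tensA R Hf p'00 Hg; rewrite !addn0 in assoc.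
exact: pv_trans (pv_tens (prov_scalar_tensC p'00 Hf) (pv_refl R Hg)) assoc.
Qed.

Lemma prov_scalar_tens_exchange u n m : hasT u n m ->
  prv n m (Ttens (Ttens p p') u) (Ttens p' (Ttens p u)).
Proof.
move=> Hu; apply: pv_trans (pv_tensA R p'00 p00 Hu).
exact: pv_tens (prov_scalar_tensC p00 p'00) (pv_refl R Hu).
Qed.

End Scalars.

Lemma hasType_tens_scalar p f n m : hasT p 0 0 -> hasT (Ttens p f) n m -> hasT f n m.
Proof.
rewrite /hasType /= => /and3P[_ /eqP-> /eqP->].
by rewrite !add0n => /and3P[/andP[_ ->] -> ->].
Qed.

Lemma prov_tens_scalar_cancel p q p' f g n m :
    hasT p 0 0 -> hasT q 0 0 -> hasT p' 0 0 ->
    prv 0 0 (Tcomp p p') (Tid 0) -> prv 0 0 (Tcomp q p') (Tid 0) ->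
  prv n m (Ttens p f) (Ttens q g) -> prv n m f g.
Proof.
move=> p00 q00 p'00 pp' qp' pf_qg.
have [/(hasType_tens_scalar p00) Hf /(hasType_tens_scalar q00) Hg] := prov_hasType pf_qg.
have unit_l h : hasT h n m -> prv n m h (Ttens (Tid 0) (Tcomp h (Tid m))).
  move=> Hh; apply: pv_trans (pv_sym (pv_tens_unit_l R Hh)) _.
  exact: pv_tens (pv_refl R (hasType_id 0)) (pv_sym (pv_id_r R Hh)).
(* f = (p;p') (x) (f;id) = (p (x) f);(p' (x) id) by interchange, and likewise for g. *)
apply: pv_trans (unit_l f Hf) (pv_trans _ (pv_sym (unit_l g Hg))).
apply: pv_trans (pv_tens (pv_sym pp') (pv_refl R (hasType_comp Hf (hasType_id m)))) _.
apply: pv_trans _ (pv_tens qp' (pv_refl R (hasType_comp Hg (hasType_id m)))).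
apply: pv_trans (pv_sym (pv_interchange R p00 p'00 Hf (hasType_id m))) _.
apply: pv_trans _ (pv_interchange R q00 p'00 Hg (hasType_id m)).
exact: pv_comp pf_qg (pv_refl R (hasType_tens p'00 (hasType_id m))).
Qed.

End PropTheory.

Section Erasure.
Variables (G : Type) (gdom gcod : G -> nat).

Fixpoint erase_omega (t : term (option G)) : term G :=
  match t with
  | Tid n => Tid n
  | Tswap a b => Tswap a b
  | Tgen None => Tid 0
  | Tgen (Some g) => Tgen g
  | Tcomp f g => Tcomp (erase_omega f) (erase_omega g)
  | Ttens f g => Ttens (erase_omega f) (erase_omega g)
  end.

Fixpoint omega_count (t : term (option G)) : nat :=
  match t with
  | Tgen None => 1
  | Tcomp f g | Ttens f g => omega_count f + omega_count g
  | _ => 0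
  end.

Lemma tdom_erase t : tdom gdom (erase_omega t) = tdom (sdom gdom) t.
Proof. by elim: t => [n|a b|[g|]|f IHf g IHg|f IHf g IHg] //=; rewrite ?IHf ?IHg. Qed.

Lemma tcod_erase t : tcod gcod (erase_omega t) = tcod (sdom gcod) t.
Proof. by elim: t => [n|a b|[g|]|f IHf g IHg|f IHf g IHg] //=; rewrite ?IHf ?IHg. Qed.

Lemma hasType_erase t n m :
  hasType gdom gcod (erase_omega t) n m = hasType (sdom gdom) (sdom gcod) t n m.
Proof.
have wt_erase : wt gdom gcod (erase_omega t) = wt (sdom gdom) (sdom gcod) t.
  elim: t => [n'|a b|[g|]|f IHf g IHg|f IHf g IHg] //=.
    by rewrite IHf IHg tcod_erase tdom_erase.
  by rewrite IHf IHg.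
by rewrite /hasType wt_erase tdom_erase tcod_erase.
Qed.

Lemma erase_tmap C : erase_omega (tmap Some C) = C.
Proof. by elim: C => [n|a b|g|f IHf g IHg|f IHf g IHg] //=; rewrite ?IHf ?IHg. Qed.

Lemma omega_count_tmap C : omega_count (tmap Some C) = 0.
Proof. by elim: C => [n|a b|g|f IHf g IHg|f IHf g IHg] //=; rewrite ?IHf ?IHg. Qed.

Lemma omega_count_pow k : omega_count (omega_pow G k) = k.
Proof. by elim: k => //= k ->. Qed.

Lemma prov_erase_omega_pow R k : prov gdom gcod R 0 0 (erase_omega (omega_pow G k)) (Tid 0).
Proof.
elim: k => [|k IHk]; first exact/pv_refl/hasType_id.
have [Hk _] := prov_hasType IHk.
exact: pv_trans (pv_id_l R Hk) IHk.
Qed.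

End Erasure.

Section ScalarSemantics.
Local Open Scope ring_scope.
Variables (G : Type) (gdom gcod : G -> nat) (d : nat).
Variable I : G -> seq 'I_d -> seq 'I_d -> CC.

Definition scal (t : term G) : CC := scalar_of (sem gdom gcod I t).

Lemma scal_id0 : scal (Tid 0) = 1.
Proof. by rewrite /scal /scalar_of /= mulr1n. Qed.

Lemma scal_tens p q : scal (Ttens p q) = scal p * scal q.
Proof. by []. Qed.

Lemma scal_comp p q : hasType gdom gcod p 0 0 -> scal (Tcomp p q) = scal q * scal p.
Proof.
case/and3P=> _ _ /eqP cod_p; rewrite /scal /scalar_of /=.
move: (sem gdom gcod I q) (sem gdom gcod I p); rewrite cod_p => Fq Fp.
by rewrite (big_pred1 [tuple]) // => y; apply/esym/eqP; exact: tuple0.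
Qed.

Lemma sem_eq_scalarE F F' : @sem_eq d 0 0 F F' <-> scalar_of F = scalar_of F'.
Proof.
split=> [eqF | eqF y x]; first exact: eqF [tuple] [tuple].
by rewrite [y]tuple0 [x]tuple0.
Qed.

End ScalarSemantics.

Section Refinement.
Local Open Scope ring_scope.
Variables (G : Type) (gdom gcod : G -> nat) (R : eqns G) (d : nat).
Variable I : G -> seq 'I_d -> seq 'I_d -> CC.
Variables (s : term G) (m l r : nat) (zeta : CC).
Hypotheses (s00 : hasType gdom gcod s 0 0) (zeta_neq0 : zeta != 0).
Hypotheses (zeta_order : zeta ^+ (m * l) = 1) (zeta_root : zeta ^+ r = scal gdom gcod I s).

Local Notation hasT := (hasType gdom gcod).
Local Notation prv := (prov gdom gcod R).
Local Notation erase := (@erase_omega G).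
Local Notation scl := (scal gdom gcod I).

Definition scalar_related n n' (u v : term (option G)) :=
  exists p q, [/\ hasT p 0 0, hasT q 0 0,
    prv n n' (Ttens p (erase u)) (Ttens q (erase v)) &
    zeta ^+ omega_count u * scl q = zeta ^+ omega_count v * scl p].

Lemma scalar_related_erase n n' u v :
    prv n n' (erase u) (erase v) -> omega_count u = omega_count v ->
  scalar_related n n' u v.
Proof.
move=> uv cnt; exists (Tid 0), (Tid 0); split; try exact: hasType_id.
  exact: pv_tens (pv_refl R (hasType_id gdom gcod 0)) uv.
by rewrite cnt.
Qed.

Lemma scalar_related_sym n n' u v : scalar_related n n' u v -> scalar_related n n' v u.
Proof. by case=> p [q [p00 q00 uv cnt]]; exists q, p; split=> //; exact: pv_sym. Qed.

Lemma scalar_related_trans n n' u v w :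
    hasT (erase u) n n' -> hasT (erase v) n n' -> hasT (erase w) n n' ->
    scalar_related n n' u v -> scalar_related n n' v w ->
  scalar_related n n' u w.
Proof.
move=> Hu Hv Hw [p [q [p00 q00 uv cnt_uv]]] [p' [q' [p'00 q'00 vw cnt_vw]]].
exists (Ttens p p'), (Ttens q q').
split; [exact: hasType_tens p00 p'00 | exact: hasType_tens q00 q'00 | |].
  apply: pv_trans (prov_scalar_tens_exchange R p00 p'00 Hu) _.
  apply: pv_trans (pv_tens (pv_refl R p'00) uv) _.
  apply: pv_trans (pv_sym (prov_scalar_tens_exchange R q00 p'00 Hv)) _.
  apply: pv_trans (pv_tensA R q00 p'00 Hv) _.
  apply: pv_trans (pv_tens (pv_refl R q00) vw) _.
  exact: pv_sym (pv_tensA R q00 q'00 Hw).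
apply: (mulfI (expf_neq0 (omega_count v) zeta_neq0)); rewrite !scal_tens.
transitivity ((zeta ^+ omega_count u * scl q) * (zeta ^+ omega_count v * scl q')).
  by ring.
by rewrite cnt_uv cnt_vw; ring.
Qed.

Lemma scalar_related_comp n n' k f f' g g' :
    hasT (erase f) n n' -> hasT (erase f') n n' ->
    hasT (erase g) n' k -> hasT (erase g') n' k ->
    scalar_related n n' f f' -> scalar_related n' k g g' ->
  scalar_related n k (Tcomp f g) (Tcomp f' g').
Proof.
move=> Hf Hf' Hg Hg' [p [q [p00 q00 ff' cnt_f]]] [p' [q' [p'00 q'00 gg' cnt_g]]].
exists (Ttens p p'), (Ttens q q').
split; [exact: hasType_tens p00 p'00 | exact: hasType_tens q00 q'00 | |].
  apply: pv_trans (prov_scalar_tens_comp R p00 p'00 Hf Hg) _.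
  exact: pv_trans (pv_comp ff' gg') (pv_sym (prov_scalar_tens_comp R q00 q'00 Hf' Hg')).
rewrite /= !scal_tens !exprD.
transitivity ((zeta ^+ omega_count f * scl q) * (zeta ^+ omega_count g * scl q')).
  by ring.
by rewrite cnt_f cnt_g; ring.
Qed.

Lemma scalar_related_tens a b c e f f' g g' :
    hasT (erase f) a b -> hasT (erase f') a b ->
    hasT (erase g) c e -> hasT (erase g') c e ->
    scalar_related a b f f' -> scalar_related c e g g' ->
  scalar_related (a + c) (b + e) (Ttens f g) (Ttens f' g').
Proof.
move=> Hf Hf' Hg Hg' [p [q [p00 q00 ff' cnt_f]]] [p' [q' [p'00 q'00 gg' cnt_g]]].
exists (Ttens p p'), (Ttens q q').
split; [exact: hasType_tens p00 p'00 | exact: hasType_tens q00 q'00 | |].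
  apply: pv_trans (prov_scalar_tens_tens R p00 p'00 Hf Hg) _.
  exact: pv_trans (pv_tens ff' gg') (pv_sym (prov_scalar_tens_tens R q00 q'00 Hf' Hg')).
rewrite /= !scal_tens !exprD.
transitivity ((zeta ^+ omega_count f * scl q) * (zeta ^+ omega_count g * scl q')).
  by ring.
by rewrite cnt_f cnt_g; ring.
Qed.

Lemma scalar_related_refined_axiom n n' u v :
    Rsharp R s m l r n n' u v ->
    hasType (sdom gdom) (sdom gcod) u n n' -> hasType (sdom gdom) (sdom gcod) v n n' ->
  scalar_related n n' u v.
Proof.
case=> {n n' u v} [n n' u v uv|_ _|_ _].
- rewrite -!hasType_erase !erase_tmap => Hu Hv.
  by apply: scalar_related_erase; rewrite ?erase_tmap ?omega_count_tmap //; exact: pv_ax.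
- exists (Tid 0), (Tid 0); split; try exact: hasType_id.
    exact: pv_tens (pv_refl R (hasType_id _ _ 0)) (prov_erase_omega_pow _ _ R _).
  by rewrite omega_count_pow zeta_order.
- exists s, (Tid 0); split; [done | exact: hasType_id | |].
    rewrite erase_tmap.
    apply: pv_trans (pv_tens (pv_refl R s00) (prov_erase_omega_pow _ _ R r)) _.
    exact: pv_trans (pv_tens_unit_r R s00) (pv_sym (pv_tens_unit_l R s00)).
  by rewrite omega_count_pow omega_count_tmap scal_id0 mulr1 expr0 mul1r zeta_root.
Qed.

Lemma prov_refined_related n n' u v :
  prov (sdom gdom) (sdom gcod) (Rsharp R s m l r) n n' u v -> scalar_related n n' u v.
Proof.
elim=> {n n' u v}.
- by move=> n n' u v ax Hu Hv; exact: scalar_related_refined_axiom.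
- move=> n n' u Hu; apply: scalar_related_erase => //.
  by apply: pv_refl; rewrite hasType_erase.
- by move=> n n' u v _; exact: scalar_related_sym.
- move=> n n' u v w uv IHuv vw IHvw.
  have [Hu Hv] := prov_hasType uv; have [_ Hw] := prov_hasType vw.
  rewrite -!hasType_erase in Hu Hv Hw; exact: scalar_related_trans IHuv IHvw.
- move=> n n' k f f' g g' ff' IHf gg' IHg.
  have [Hf Hf'] := prov_hasType ff'; have [Hg Hg'] := prov_hasType gg'.
  rewrite -!hasType_erase in Hf Hf' Hg Hg'; exact: scalar_related_comp IHf IHg.
- move=> a b c e f f' g g' ff' IHf gg' IHg.
  have [Hf Hf'] := prov_hasType ff'; have [Hg Hg'] := prov_hasType gg'.
  rewrite -!hasType_erase in Hf Hf' Hg Hg'; exact: scalar_related_tens IHf IHg.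
- move=> n n' k p f g h Hf Hg Hh; rewrite -!hasType_erase in Hf Hg Hh.
  by apply: scalar_related_erase => /=; [exact: (pv_compA R Hf Hg Hh) | lia].
- move=> n n' f Hf; rewrite -hasType_erase in Hf.
  by apply: scalar_related_erase => /=; [exact: (pv_id_l R Hf) | lia].
- move=> n n' f Hf; rewrite -hasType_erase in Hf.
  by apply: scalar_related_erase => /=; [exact: (pv_id_r R Hf) | lia].
- move=> a b c e p q f g h Hf Hg Hh; rewrite -!hasType_erase in Hf Hg Hh.
  by apply: scalar_related_erase => /=; [exact: (pv_tensA R Hf Hg Hh) | lia].
- move=> n n' f Hf; rewrite -hasType_erase in Hf.
  by apply: scalar_related_erase => /=; [exact: (pv_tens_unit_l R Hf) | lia].
- move=> n n' f Hf; rewrite -hasType_erase in Hf.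
  by apply: scalar_related_erase => /=; [exact: (pv_tens_unit_r R Hf) | lia].
- by move=> a b; apply: scalar_related_erase; [exact: pv_tens_id |].
- move=> a b c e p q f f' g g' Hf Hf' Hg Hg'.
  rewrite -!hasType_erase in Hf Hf' Hg Hg'.
  by apply: scalar_related_erase => /=; [exact: (pv_interchange R Hf Hf' Hg Hg') | lia].
- by move=> a b; apply: scalar_related_erase; [exact: pv_swap_inv |].
- move=> a b c e f g Hf Hg; rewrite -!hasType_erase in Hf Hg.
  by apply: scalar_related_erase => /=; [exact: (pv_swap_nat R Hf Hg) | lia].
- by move=> a; apply: scalar_related_erase; [exact: pv_swap_unit |].
- by move=> a b c; apply: scalar_related_erase; [exact: pv_hex1 |].
- by move=> a b c; apply: scalar_related_erase; [exact: pv_hex2 |].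
Qed.

End Refinement.

Local Open Scope ring_scope.

Theorem mainTheorem3
  (G : Type) (gdom gcod : G -> nat) (R : eqns G) (d : nat)
  (I : G -> seq 'I_d -> seq 'I_d -> CC)
  (s : term G) (m l r : nat) (zeta : CC)
  (* the interpretation [[-]]_src = sem gdom gcod I is well defined on P/R *)
  (Hsound : forall n n' t1 t2, R n n' t1 t2 ->
      sem_eq n n' (sem gdom gcod I t1) (sem gdom gcod I t2))
  (* ... and faithful *)
  (Hfaith : forall n n' t1 t2,
      hasType gdom gcod t1 n n' -> hasType gdom gcod t2 n n' ->
      sem_eq n n' (sem gdom gcod I t1) (sem gdom gcod I t2) ->
      prov gdom gcod R n n' t1 t2)
  (* C^src (the image) is endomorphism-only *)
  (Hendo : forall t n n', hasType gdom gcod t n n' -> n = n')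
  (* s is a source scalar *)
  (Hs : hasType gdom gcod s 0 0)
  (* C^src(0,0) is generated by [[s]] ... *)
  (Hgen : forall t, hasType gdom gcod t 0 0 ->
      exists k, scalar_of (sem gdom gcod I t) = scalar_of (sem gdom gcod I s) ^+ k)
  (* ... and is cyclic of order m *)
  (Hord : m.-primitive_root (scalar_of (sem gdom gcod I s)))
  (* no hidden phases *)
  (Hphase : forall n (lam : CC), `|lam| = 1 ->
      (exists t, hasType gdom gcod t n n /\
                 sem_eq n n (sem gdom gcod I t) (@scal_id d lam)) ->
      exists t0, hasType gdom gcod t0 0 0 /\ scalar_of (sem gdom gcod I t0) = lam)
  (* every morphism of C^src is invertible in C^src *)
  (Hinv : forall t n n', hasType gdom gcod t n n' ->
      exists t', hasType gdom gcod t' n' n /\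
        sem_eq n n (sem gdom gcod I (Tcomp t t')) (sem gdom gcod I (Tid n)) /\
        sem_eq n' n' (sem gdom gcod I (Tcomp t' t)) (sem gdom gcod I (Tid n')))
  (Hl : (0 < l)%N)
  (Hzeta : (m * l).-primitive_root zeta)
  (Hr : zeta ^+ r = scalar_of (sem gdom gcod I s)) :
  forall (n n' : nat) (C1 C2 : term G),
    prov (sdom gdom) (sdom gcod) (Rsharp R s m l r) n n'
         (tmap Some C1) (tmap Some C2) ->
    prov gdom gcod R n n' C1 C2.
Proof.
move=> n n' C1 C2 refined.
have zeta_neq0 : zeta != 0.
  apply/eqP=> zeta0; have := prim_expr_order Hzeta.
  by rewrite zeta0 expr0n eqn0Ngt (prim_order_gt0 Hzeta) => /eqP; rewrite eq_sym oner_eq0.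
have [p [q [p00 q00 pC1_qC2 eq_pq]]] :=
  prov_refined_related Hs zeta_neq0 (prim_expr_order Hzeta) Hr refined.
rewrite !erase_tmap !omega_count_tmap !expr0 !mul1r in pC1_qC2 eq_pq.
have [p' [p'00 [pp' _]]] := Hinv p 0 0 p00.
apply: (prov_tens_scalar_cancel p00 q00 p'00 _ _ pC1_qC2).
  exact: Hfaith (hasType_comp p00 p'00) (hasType_id _ _ 0) pp'.
have scal_pp' : scal gdom gcod I (Tcomp p p') = scal gdom gcod I (Tid 0).
  exact/sem_eq_scalarE.
apply: Hfaith (hasType_comp q00 p'00) (hasType_id _ _ 0) _.
by apply/sem_eq_scalarE; rewrite [LHS]scal_comp // eq_pq -scal_comp.
Qed.
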